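(* Let $W$ be a nonzero restricted $\widehat{\mathfrak h}$-module satisfying condition $\mathcal C_0$. Then $\Omega_W\neq0$, i.e. $W$ contains a vacuum vector.
   Context: Let $p$ be a prime and $\mathbb{F}$ a field of characteristic $p$. Integers are viewed as elements of the prime subfield of $\mathbb{F}$. We write $\mathbb{Z}_+$ for the positive integers. <b>Heisenberg setup.</b> Let $\mathfrak h$ be a finite-dimensional $\mathbb{F}$-vector space with a non-degenerate symmetric bilinear form $\langle\cdot,\cdot\rangle$. The affine Lie algebra is $\widehat{\mathfrak h}=\mathfrak h\otimes\mathbb{F}[t,t^{-1}]\oplus\mathbb{F}\mathbf k$, where $\mathbf k$ is central and, writing $u(m)=u\otimes t^m$, $$[u(m),v(n)]=m\,\delta_{m+n,0}\langle u,v\rangle\mathbf k.$$ Set $\widehat{\mathfrak h}_+=\bigoplus_{n>0}\mathfrak h\otimes t^{-n}$ and $\widehat{\mathfrak h}_-=\bigoplus_{n>0}\mathfrak h\otimes t^{n}$. For a linear functional $\lambda\in(\widehat{\mathfrak h}_+)^*$, write $\lambda_n(u)=\lambda(u(-n))$ for $u\in\mathfrak h$, $n\in\mathbb{Z}_+$. <b>Restricted modules and vacuum vectors.</b> An $\widehat{\mathfrak h}$-module $W$ is restricted if for all $u\in\mathfrak h$ and $w\in W$ we have $u(n)w=0$ for $n\gg0$. Set $\Omega_W=\{w\in W:\widehat{\mathfrak h}_-w=0\}$; its nonzero elements are called vacuum vectors. <b>Condition $\mathcal C_0$.</b> A restricted $\widehat{\mathfrak h}$-module $W$ satisfies condition $\mathcal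 C_0$ if both of the following hold. <ol> <li>For all $u\in\mathfrak h$ and $n\in\mathbb{Z}_+$, the operators $u(np)$ and $u(n)^p$ act as $0$ on $W$.</li> <li>The operators $u(-np)$ and $u(-n)^p$ ($u\in\mathfrak h$, $n\ge0$) act semisimply and simultaneously. Precisely, $$W=\bigoplus_{(\lambda_0,\lambda)\in\mathfrak h^*\times(\widehat{\mathfrak h}_+)^*}W_{\lambda_0,\lambda},$$ where $W_{\lambda_0,\lambda}$ is the set of $w\in W$ such that: <ul> <li>$u(0)w=\lambda_0(u)w$ for all $u\in\mathfrak h$;</li> <li>$u(-m)w=\lambda_m(u)w$ for all $u\in\mathfrak h$, $m\in p\mathbb{Z}_+$;</li> <li>$u(-n)^pw=\lambda_n(u)^pw$ for all $u\in\mathfrak h$, $n\in\mathbb{Z}_+$.</li> </ul></li> </ol> *)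

From HB Require Import structures.
From mathcomp Require Import all_boot all_order all_algebra.
Set Implicit Arguments. Unset Strict Implicit. Unset Printing Implicit Defensive.
Import Order.TTheory GRing.Theory Num.Theory.
Local Open Scope ring_scope.

(* An action of the affine Heisenberg algebra  \hat h  on W is encoded by
   rho u n = the operator u(n) = u ⊗ t^n  (u : h, n : int), and
   K = the operator by which the central element k acts. *)

Section Heis.
Variables (F : fieldType) (hT : vectType F) (W : lmodType F).

Definition lin_functional (f : hT -> F) : Prop :=
  forall (a : F) (u v : hT), f (a *: u + v) = a * f u + f v.

Definition nondeg_sym_bilinear (form : hT -> hT -> F) : Prop :=
  [/\ forall u v, form u v = form v u,
      forall (a : F) u v w, form (a *: u + v) w = a * form u w + form v w
    & forall u, (forall v, form u v = 0) -> u = 0].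

Definition heis_module (form : hT -> hT -> F)
    (rho : hT -> int -> W -> W) (K : W -> W) : Prop :=
  [/\ forall u n (a : F) (w1 w2 : W),
        rho u n (a *: w1 + w2) = a *: rho u n w1 + rho u n w2,
      forall (a : F) (w1 w2 : W), K (a *: w1 + w2) = a *: K w1 + K w2,
      forall (a : F) u v n w, rho (a *: u + v) n w = a *: rho u n w + rho v n w,
      forall u n w, K (rho u n w) = rho u n (K w)
    & forall u v (m n : int) w,
        rho u m (rho v n w) - rho v n (rho u m w)
        = (if m + n == 0 then m%:~R * form u v else 0) *: K w].

Definition restricted (rho : hT -> int -> W -> W) : Prop :=
  forall u w, exists N : nat, forall n : nat, (N <= n)%N -> rho u (Posz n) w = 0.

(* A weight (λ0, λ) ∈ h^* × (\hat h_+)^*: λ0 is a functional on h and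
   λ n (for n > 0) is the functional λ_n(u) = λ(u(-n)); the value λ 0 is unused. *)
Definition weight_ok (l0 : hT -> F) (l : nat -> hT -> F) : Prop :=
  lin_functional l0 /\ forall n : nat, (0 < n)%N -> lin_functional (l n).

Definition in_weight_space (p : nat) (rho : hT -> int -> W -> W)
    (l0 : hT -> F) (l : nat -> hT -> F) (w : W) : Prop :=
  [/\ forall u, rho u 0 w = l0 u *: w,
      forall u (m : nat), (0 < m)%N -> (p %| m)%N -> rho u (- Posz m) w = l m u *: w
    & forall u (n : nat), (0 < n)%N -> iter p (rho u (- Posz n)) w = (l n u) ^+ p *: w].

Definition same_weight (l0 l0' : hT -> F) (l l' : nat -> hT -> F) : Prop :=
  (forall u, l0 u = l0' u) /\ (forall n u, (0 < n)%N -> l n u = l' n u).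

Definition cond_C0 (p : nat) (rho : hT -> int -> W -> W) : Prop :=
  [/\
      forall u (n : nat) w, (0 < n)%N ->
        rho u (Posz (n * p)) w = 0 /\ iter p (rho u (Posz n)) w = 0,
      (* (2a) W is the sum of the weight spaces *)
      forall w : W, exists (N : nat) (L0 : 'I_N -> hT -> F)
          (L : 'I_N -> nat -> hT -> F) (v : 'I_N -> W),
        (forall i, weight_ok (L0 i) (L i) /\ in_weight_space p rho (L0 i) (L i) (v i))
        /\ w = \sum_(i < N) v i
    & (* (2b) the sum is direct *)
      forall (N : nat) (L0 : 'I_N -> hT -> F) (L : 'I_N -> nat -> hT -> F)
          (v : 'I_N -> W),
        (forall i j, same_weight (L0 i) (L0 j) (L i) (L j) -> i = j) ->
        (forall i, weight_ok (L0 i) (L i) /\ in_weight_space p rho (L0 i) (L i) (v i)) ->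
        \sum_(i < N) v i = 0 -> forall i, v i = 0].

Definition vacuum_space (rho : hT -> int -> W -> W) (w : W) : Prop :=
  forall u (n : nat), (0 < n)%N -> rho u (Posz n) w = 0.

End Heis.

From HB Require Import structures.
From mathcomp Require Import all_boot all_order all_algebra.
Import GRing.Theory.
Local Open Scope ring_scope.

(* The positive modes u(n), n > 0, pairwise commute (the bracket vanishes since
   m + n != 0) and each is nilpotent by condition C_0, so finitely many of them
   have a common nonzero kernel vector inside any subspace they preserve.  By
   restrictedness, a nonzero w is killed by all u(n), n > N, for u in a basis of
   h; these conditions are preserved by the finitely many modes u(1), ..., u(N),
   whose common kernel in that set therefore contains a vacuum vector. *)

Lemma nilpotent_kernel_vector {V : zmodType} {p : nat} {f : V -> V}
    {Q : V -> Prop} {w : V} :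
  iter p f w = 0 -> (forall x, Q x -> Q (f x)) -> w != 0 -> Q w ->
  exists v, [/\ v != 0, Q v & f v = 0].
Proof.
move=> + Qf; elim: p w => [w /= -> /eqP //|p IHp w].
rewrite iterSr => fpw w0 Qw.
have [fw0|fw_neq0] := eqVneq (f w) 0; first by exists w.
exact: IHp (Qf w Qw).
Qed.

Lemma commuting_nilpotents_kernel_vector (V : zmodType) (p : nat) (I : eqType)
    (op : I -> V -> V) (s : seq I) (Q : V -> Prop) (w : V) :
  {in s, forall i, op i 0 = 0} ->
  {in s, forall i x, iter p (op i) x = 0} ->
  {in s &, forall i j x, op i (op j x) = op j (op i x)} ->
  {in s, forall i x, Q x -> Q (op i x)} ->
  w != 0 -> Q w -> exists v, [/\ v != 0, Q v & {in s, forall i, op i v = 0}].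
Proof.
elim: s Q w => [|i s IHs] Q w op0 opnil opC opQ w0 Qw; first by exists w.
have s_sub x : x \in s -> x \in i :: s by rewrite inE orbC => ->.
have i_in : i \in i :: s by rewrite inE eqxx.
have [u [u0 Qu opiu]] :=
  nilpotent_kernel_vector (opnil i i_in w) (opQ i i_in) w0 Qw.
have [v [v0 [Qv opiv] opsv]] :
    exists v, [/\ v != 0, Q v /\ op i v = 0 & {in s, forall j, op j v = 0}].
  apply: IHs u0 (conj Qu opiu).
  - by move=> j /s_sub /op0.
  - by move=> j /s_sub /opnil.
  - by move=> j k /s_sub js /s_sub ks; apply: opC.
  - move=> j /s_sub js x [Qx opix]; split; first exact: opQ.
    by rewrite opC // opix op0.
exists v; split=> // j; rewrite inE => /predU1P[->|]; [exact: opiv|exact: opsv].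
Qed.

Section HeisenbergModes.
Context {F : fieldType} {hT : vectType F} {W : lmodType F}.
Context {form : hT -> hT -> F} {rho : hT -> int -> W -> W} {K : W -> W}.

Lemma restricted_uniform (s : seq hT) (w : W) :
  restricted rho ->
  exists N : nat, forall u, u \in s -> forall n : nat, (N < n)%N ->
    rho u (Posz n) w = 0.
Proof.
move=> hres; elim: s => [|u s [N hN]]; first by exists 0%N.
have [M hM] := hres u w.
exists (maxn M N) => v; rewrite inE => /predU1P[->|vs] n; rewrite gtn_max.
  by case/andP=> /ltnW /hM.
by case/andP=> _ /(hN v vs).
Qed.

Hypothesis hmod : heis_module form rho K.

Lemma rho0 u n : rho u n 0 = 0.
Proof.
case: hmod => hlin _ _ _ _.
by have := hlin u n (-1) 0 0; rewrite scaler0 addr0 scaleN1r addNr.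
Qed.

Lemma rho_pos_modesC u v (m n : nat) x : (0 < m)%N -> (0 < n)%N ->
  rho u (Posz m) (rho v (Posz n) x) = rho v (Posz n) (rho u (Posz m) x).
Proof.
case: hmod => _ _ _ _ hbr m0 n0; apply/eqP; rewrite -subr_eq0 hbr -PoszD.
by rewrite eqz_nat addn_eq0 !eqn0Ngt m0 n0 scale0r.
Qed.

Lemma rho_vanish_on_vbasis n w :
  (forall b, b \in vbasis (fullv : {vspace hT}) -> rho b n w = 0) ->
  forall u, rho u n w = 0.
Proof.
case: hmod => _ _ hlinu _ _ hB u.
have rhoD x y : rho (x + y) n w = rho x n w + rho y n w.
  by have := hlinu 1 x y n w; rewrite !scale1r.
have rho_at0 : rho 0 n w = 0 by apply: (addrI (rho 0 n w)); rewrite -rhoD !addr0.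
rewrite (coord_vbasis (memvf u)); apply: (big_ind (fun x => rho x n w = 0)) => //.
  by move=> x y; rewrite rhoD => -> ->; rewrite addr0.
move=> i _; rewrite -[_ *: _]addr0 hlinu rho_at0 addr0 hB ?scaler0 //.
by apply: mem_nth; rewrite size_tuple.
Qed.

End HeisenbergModes.

Theorem lemma4 (p : nat) (F : fieldType) (hp : prime p) (charF : p \in [pchar F])
    (hT : vectType F) (form : hT -> hT -> F) (hform : nondeg_sym_bilinear form)
    (W : lmodType F) (rho : hT -> int -> W -> W) (K : W -> W)
    (hmod : heis_module form rho K) (hres : restricted rho)
    (hC0 : cond_C0 p rho) (hW : exists w : W, w <> 0) :
  exists w : W, w <> 0 /\ vacuum_space rho w.
Proof.
case: hC0 => hnil _ _; case: hW => w /eqP w0.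
pose B : seq hT := vbasis fullv.
have [N hN] := restricted_uniform B w hres.
pose Q x := forall u, u \in B -> forall n : nat, (N < n)%N -> rho u (Posz n) x = 0.
pose s := [seq (u, k) | u <- B, k <- iota 1 N].
pose op (i : hT * nat) := rho i.1 (Posz i.2).
have s_pos i : i \in s -> (0 < i.2)%N.
  by case/allpairsP=> [[u k] [_ + ->]]; rewrite mem_iota => /andP[].
have [v [v0 Qv opv]] : exists v, [/\ v != 0, Q v & {in s, forall i, op i v = 0}].
  apply: (commuting_nilpotents_kernel_vector _ p) w0 hN.
  - by move=> i _; apply: rho0 hmod _ _.
  - by move=> i /s_pos i0 x; have [_] := hnil i.1 i.2 x i0.
  - by move=> i j /s_pos i0 /s_pos j0 x; exact: (rho_pos_modesC hmod).
  - move=> i /s_pos i0 x Qx u uB n Nn.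
    by rewrite (rho_pos_modesC hmod) ?Qx ?(rho0 hmod) //; apply: leq_ltn_trans Nn.
exists v; split=> [|u n n0]; first exact/eqP.
apply: (rho_vanish_on_vbasis hmod) => b bB.
have [Nn|nN] := ltnP N n; first exact: Qv.
by apply: (opv (b, n)); apply: allpairs_f; rewrite // mem_iota n0 add1n ltnS.
Qed.
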